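(* Let $\beta\in(1,3/2]$, let $\vec z\in S_\beta$ and let $\vec z=\sum_{i=1}^\infty a_i\beta^{-i}$ with $a_i\in\{\vec q_0,\vec q_1,\vec q_2\}$ be any representation of $\vec z$ in base $\beta$. Then there exist $\omega\in\Omega$ and $\upsilon\in\Upsilon$ such that $a_i=d_i(\omega,\upsilon,\vec z)$ for all $i\ge1$.
   Context: $\vec q_0=(0,0)$, $\vec q_1=(1,0)$, $\vec q_2=(0,1)$; $S_\beta$ is the attractor of the IFS $f_{\vec q_i}(\vec z)=(\vec z+\vec q_i)/\beta$ (for $1<\beta\le3/2$ the closed triangle with vertices $(0,0)$, $(\frac1{\beta-1},0)$, $(0,\frac1{\beta-1})$). Subsets of $S_\beta$: $E_0=[0,\frac1\beta)\times[0,\frac1\beta)$; $E_1=\{0\le y<\frac1\beta,\ \frac{1}{\beta(\beta-1)}<x+y\le\frac{1}{\beta-1}\}$; $E_2=\{0\le x<\frac1\beta,\ \frac{1}{\beta(\beta-1)}<x+y\le\frac{1}{\beta-1}\}$; $C_{01}=\{x\ge\frac1\beta,\ 0\le y<\frac1\beta,\ x+y\le\frac{1}{\beta(\beta-1)}\}$; $C_{12}=\{x\ge\frac1\beta,\ y\ge\frac1\beta,\ \frac{1}{\beta(\beta-1)}<x+y\le\frac{1}{\beta-1}\}$; $C_{02}=\{0\le x<\frac1\beta,\ y\ge\frac1\beta,\ x+y\le\frac{1}{\beta(\beta-1)}\}$; $C_{012}=\{x\ge\frac1\beta,\ y\ge\frac1\beta,\ x+y\le\frac{1}{\beta(\beta-1)}\}$.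 $\Omega=\{0,1\}^{\mathbb N}$, $\Upsilon=\{0,1,2\}^{\mathbb N}$ with left shifts $\sigma,\sigma'$. $K_\beta:\Omega\times\Upsilon\times S_\beta\to\Omega\times\Upsilon\times S_\beta$: $K_\beta(\omega,\upsilon,\vec z)=(\omega,\upsilon,\beta\vec z-\vec q_i)$ if $\vec z\in E_i$; $(\sigma\omega,\upsilon,\beta\vec z-\vec q_i)$ if $\omega_1=0$, $\vec z\in C_{ij}$ ($ij\in\{01,12,02\}$); $(\sigma\omega,\upsilon,\beta\vec z-\vec q_j)$ if $\omega_1=1$, $\vec z\in C_{ij}$; $(\omega,\sigma'\upsilon,\beta\vec z-\vec q_i)$ if $\vec z\in C_{012}$ and $\upsilon_1=i$. The digit $d_1(\omega,\upsilon,\vec z)$ is the vector subtracted in this definition, and $d_n=d_1\circ K_\beta^{n-1}$. *)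

From Stdlib Require Import Reals Lra ClassicalEpsilon.
Open Scope R_scope.

Inductive digit3 := D0 | D1 | D2.

Definition qv (i : digit3) : R * R :=
  match i with D0 => (0, 0) | D1 => (1, 0) | D2 => (0, 1) end.

(* Omega = {0,1}^N (false = 0, true = 1); Upsilon = {0,1,2}^N.
   Sequences are indexed from 0: w 0 is omega_1, etc. *)
Definition Omega := nat -> bool.
Definition Upsilon := nat -> digit3.
Definition shiftO (w : Omega) : Omega := fun n => w (S n).
Definition shiftU (u : Upsilon) : Upsilon := fun n => u (S n).

Definition S_beta (beta : R) (z : R * R) : Prop :=
  0 <= fst z /\ 0 <= snd z /\ fst z + snd z <= / (beta - 1).

Section Regions.
Variable beta : R.
Let c := / (beta * (beta - 1)).
Let t := / (beta - 1).

Definition E0 (z : R * R) : Prop :=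
  let (x, y) := z in 0 <= x < / beta /\ 0 <= y < / beta.
Definition E1 (z : R * R) : Prop :=
  let (x, y) := z in 0 <= y < / beta /\ c < x + y <= t.
Definition E2 (z : R * R) : Prop :=
  let (x, y) := z in 0 <= x < / beta /\ c < x + y <= t.
Definition C01 (z : R * R) : Prop :=
  let (x, y) := z in / beta <= x /\ 0 <= y < / beta /\ x + y <= c.
Definition C12 (z : R * R) : Prop :=
  let (x, y) := z in / beta <= x /\ / beta <= y /\ c < x + y <= t.
Definition C02 (z : R * R) : Prop :=
  let (x, y) := z in 0 <= x < / beta /\ / beta <= y /\ x + y <= c.
Definition C012 (z : R * R) : Prop :=
  let (x, y) := z in / beta <= x /\ / beta <= y /\ x + y <= c.
End Regions.

Definition pdec (P : Prop) : {P} + {~ P} := excluded_middle_informative P.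

Definition affmap (beta : R) (z q : R * R) : R * R :=
  (beta * fst z - fst q, beta * snd z - snd q).

Definition State := (Omega * Upsilon * (R * R))%type.

(* One step of K_beta, together with the digit d_1 (the subtracted vector).
   The final default branch is never used on S_beta (the regions partition it). *)
Definition Kstep (beta : R) (s : State) : State * (R * R) :=
  let '(w, u, z) := s in
  let go w' u' i := ((w', u', affmap beta z (qv i)), qv i) in
  if pdec (E0 beta z) then go w u D0
  else if pdec (E1 beta z) then go w u D1
  else if pdec (E2 beta z) then go w u D2
  else if pdec (C01 beta z) then
    (if w 0%nat then go (shiftO w) u D1 else go (shiftO w) u D0)
  else if pdec (C12 beta z) then
    (if w 0%nat then go (shiftO w) u D2 else go (shiftO w) u D1)
  else if pdec (C02 beta z) then
    (if w 0%nat then go (shiftO w) u D2 else go (shiftO w) u D0)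
  else if pdec (C012 beta z) then go w (shiftU u) (u 0%nat)
  else ((w, u, affmap beta z (0, 0)), (0, 0)).

Definition K_beta (beta : R) (s : State) : State := fst (Kstep beta s).
Definition d1 (beta : R) (s : State) : R * R := snd (Kstep beta s).

(* digit n s = d_{n+1}(s) = d_1 (K_beta^n s). *)
Fixpoint Kiter (beta : R) (n : nat) (s : State) : State :=
  match n with O => s | S m => K_beta beta (Kiter beta m s) end.
Definition digit (beta : R) (n : nat) (s : State) : R * R :=
  d1 beta (Kiter beta n s).

(* z = sum_{i>=1} a_i beta^{-i}, with a k standing for a_{k+1}. *)
Definition is_beta_rep (beta : R) (a : nat -> R * R) (z : R * R) : Prop :=
  infinite_sum (fun k => fst (a k) / beta ^ (S k)) (fst z) /\
  infinite_sum (fun k => snd (a k) / beta ^ (S k)) (snd z).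

From Pilot Require Import Defs.
From Stdlib Require Import Reals Lra Lia ClassicalEpsilon.
From Coquelicot Require Import Coquelicot.
Open Scope R_scope.

(* The tails z_n = sum_k a_(n+k) beta^-(k+1) satisfy z_(n+1) = beta z_n - a_n and,
   being represented with digits in the simplex, all lie in S_beta.  As both z_n and
   beta z_n - a_n lie in S_beta, a_n is a digit that K_beta can produce from the
   region containing z_n.  K_beta has a free choice only in the regions C_ij, where it
   reads the next bit of omega, and in C_012, where it reads the next symbol of upsilon;
   so omega (resp. upsilon) is taken to list the choices a_n made at the successive
   visits of the orbit to the C_ij (resp. to C_012). *)

Lemma is_series_le (f g : nat -> R) (l m : R) :
  (forall k, f k <= g k) -> is_series f l -> is_series g m -> l <= m.
Proof.
  intros Hfg Hf Hg.
  apply (is_lim_seq_le (sum_n f) (sum_n g) l m); [|exact Hf|exact Hg].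
  intro n; rewrite !sum_n_Reals; apply sum_Rle; auto.
Qed.

Lemma is_series_nonneg (f : nat -> R) (l : R) :
  (forall k, 0 <= f k) -> is_series f l -> 0 <= l.
Proof.
  intros Hf Hl.
  apply (is_lim_seq_le (fun _ => 0) (sum_n f) 0 l); [|apply is_lim_seq_const|exact Hl].
  intro n; rewrite sum_n_Reals; apply cond_pos_sum; exact Hf.
Qed.

Lemma is_series_inv_pow (beta : R) :
  1 < beta -> is_series (fun k => / beta ^ S k) (/ (beta - 1)).
Proof.
  intro Hb.
  assert (Hq : Rabs (/ beta) < 1).
  { rewrite Rabs_right by (left; apply Rinv_0_lt_compat; lra).
    rewrite <- Rinv_1; apply Rinv_lt_contravar; lra. }
  apply (is_series_ext (fun k => scal (/ beta) ((/ beta) ^ k))).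
  - intro k; rewrite <- pow_inv; reflexivity.
  - replace (/ (beta - 1)) with (scal (/ beta) (/ (1 - / beta))).
    + exact (is_series_scal _ _ _ (is_series_geom _ Hq)).
    + unfold scal; simpl; unfold mult; simpl; field; lra.
Qed.

Lemma is_series_shift_scaled (s : nat -> R) (beta l : R) :
  beta <> 0 -> is_series (fun k => s k / beta ^ S k) l ->
  is_series (fun k => s (S k) / beta ^ S k) (beta * l - s 0%nat).
Proof.
  intros Hb Hl.
  assert (Htail : is_series (fun k => s (S k) / beta ^ S (S k)) (l - s 0%nat / beta)).
  { apply (is_series_incr_1 (fun k => s k / beta ^ S k)).
    replace (plus _ _) with l by (unfold plus; simpl; field; exact Hb).
    exact Hl. }
  apply (is_series_ext (fun k => scal beta (s (S k) / beta ^ S (S k)))).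
  - intro k; unfold scal; simpl; unfold mult; simpl.
    field; split; [apply pow_nonzero|]; exact Hb.
  - replace (beta * l - s 0%nat) with (scal beta (l - s 0%nat / beta)).
    + exact (is_series_scal _ _ _ Htail).
    + unfold scal; simpl; unfold mult; simpl; field; exact Hb.
Qed.

Definition is_digit (q : R * R) : Prop := q = qv D0 \/ q = qv D1 \/ q = qv D2.

Lemma is_beta_rep_ext (beta : R) (a b : nat -> R * R) (z : R * R) :
  (forall k, a k = b k) -> is_beta_rep beta a z -> is_beta_rep beta b z.
Proof.
  intros Hab [H1 H2]; apply is_series_Reals in H1, H2; split; apply is_series_Reals.
  - apply (is_series_ext _ _ _ (fun k => f_equal (fun q => fst q / _) (Hab k)) H1).
  - apply (is_series_ext _ _ _ (fun k => f_equal (fun q => snd q / _) (Hab k)) H2).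
Qed.

Lemma is_beta_rep_shift (beta : R) (a : nat -> R * R) (z : R * R) :
  1 < beta -> is_beta_rep beta a z ->
  is_beta_rep beta (fun k => a (S k)) (affmap beta z (a 0%nat)).
Proof.
  intros Hb [H1 H2]; split; apply is_series_Reals;
    [apply (is_series_shift_scaled (fun k => fst (a k)))
    |apply (is_series_shift_scaled (fun k => snd (a k)))];
    try lra; apply is_series_Reals; assumption.
Qed.

Lemma is_beta_rep_S_beta (beta : R) (a : nat -> R * R) (z : R * R) :
  1 < beta -> (forall k, is_digit (a k)) -> is_beta_rep beta a z -> S_beta beta z.
Proof.
  intros Hb Ha [H1 H2]; apply is_series_Reals in H1, H2.
  assert (Hcoord : forall k,
    0 <= fst (a k) /\ 0 <= snd (a k) /\ fst (a k) + snd (a k) <= 1).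
  { intro k; destruct (Ha k) as [ -> | [ -> | -> ] ]; simpl; lra. }
  assert (Hpow : forall k, 0 < / beta ^ S k).
  { intro k; apply Rinv_0_lt_compat, pow_lt; lra. }
  split; [|split].
  - refine (is_series_nonneg _ _ _ H1); intro k.
    apply Rmult_le_pos; [apply Hcoord|apply Rlt_le, Hpow].
  - refine (is_series_nonneg _ _ _ H2); intro k.
    apply Rmult_le_pos; [apply Hcoord|apply Rlt_le, Hpow].
  - refine (is_series_le _ _ _ _ _ (is_series_plus _ _ _ _ H1 H2) (is_series_inv_pow beta Hb)).
    intro k; specialize (Hcoord k); specialize (Hpow k).
    change (fst (a k) / beta ^ S k + snd (a k) / beta ^ S k <= / beta ^ S k).
    unfold Rdiv; rewrite <- Rmult_plus_distr_r.
    rewrite <- (Rmult_1_l (/ beta ^ S k)) at 2.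
    apply Rmult_le_compat_r; lra.
Qed.

Inductive region := RE0 | RE1 | RE2 | RC01 | RC12 | RC02 | RC012 | Rout.

(* Same case order as [Kstep], so that [Kstep] follows [region_of] where regions overlap. *)
Definition region_of (beta : R) (z : R * R) : region :=
  if pdec (Defs.E0 beta z) then RE0
  else if pdec (Defs.E1 beta z) then RE1
  else if pdec (Defs.E2 beta z) then RE2
  else if pdec (C01 beta z) then RC01
  else if pdec (C12 beta z) then RC12
  else if pdec (C02 beta z) then RC02
  else if pdec (C012 beta z) then RC012
  else Rout.

Definition admissible (r : region) (j : digit3) : Prop :=
  match r, j with
  | RE0, D0 | RE1, D1 | RE2, D2 => True
  | RC01, (D0 | D1) | RC12, (D1 | D2) | RC02, (D0 | D2) => True
  | RC012, _ => True
  | _, _ => False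
  end.

Lemma region_of_S_beta (beta : R) (z : R * R) :
  S_beta beta z -> region_of beta z <> Rout.
Proof.
  destruct z as [x y]; unfold S_beta, region_of; simpl; intros Hz.
  repeat destruct pdec; try discriminate; intros _.
  unfold Defs.E0, Defs.E1, Defs.E2, C01, C12, C02, C012 in *.
  destruct (Rlt_or_le x (/ beta)), (Rlt_or_le y (/ beta)),
    (Rle_or_lt (x + y) (/ (beta * (beta - 1)))); tauto || lra.
Qed.

Lemma region_of_admissible (beta : R) (z : R * R) (j : digit3) :
  1 < beta -> S_beta beta z -> S_beta beta (affmap beta z (qv j)) ->
  admissible (region_of beta z) j.
Proof.
  intros Hb Hz Hz'.
  assert (Hout := region_of_S_beta beta z Hz).
  assert (Hinv : beta * / beta = 1) by (field; lra).
  assert (Hc : beta * / (beta * (beta - 1)) = / (beta - 1)) by (field; lra).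
  destruct z as [x y]; revert Hout.
  unfold region_of, S_beta, affmap in *; simpl in *.
  unfold Defs.E0, Defs.E1, Defs.E2, C01, C12, C02, C012.
  repeat destruct pdec; intros Hout; try (exfalso; exact (Hout eq_refl));
    destruct j; simpl in *; try exact I; nra.
Qed.

Definition consumes_omega (r : region) : bool :=
  match r with RC01 | RC12 | RC02 => true | _ => false end.

Definition consumes_upsilon (r : region) : bool :=
  match r with RC012 => true | _ => false end.

Definition choice_bit (r : region) (j : digit3) : bool :=
  match r, j with RC01, D1 | RC12, D2 | RC02, D2 => true | _, _ => false end.

Lemma Kstep_admissible (beta : R) (w : Omega) (u : Upsilon) (z : R * R) (j : digit3) :
  let r := region_of beta z in
  admissible r j ->
  (consumes_omega r = true -> w 0%nat = choice_bit r j) ->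
  (consumes_upsilon r = true -> u 0%nat = j) ->
  Kstep beta (w, u, z) =
    ((if consumes_omega r then shiftO w else w,
      if consumes_upsilon r then shiftU u else u,
      affmap beta z (qv j)), qv j).
Proof.
  cbv zeta; unfold Kstep, region_of.
  repeat destruct pdec; destruct j; simpl; intros Hadm Hw Hu;
    try contradiction; try rewrite Hw by reflexivity; try rewrite Hu by reflexivity;
    reflexivity.
Qed.

Section Hits.
Variable P : nat -> bool.

Fixpoint hits (n : nat) : nat :=
  match n with O => O | S m => if P m then S (hits m) else hits m end.

Lemma hits_le (m n : nat) : (m <= n)%nat -> (hits m <= hits n)%nat.
Proof.
  induction 1 as [|n _ IH]; [lia|]; simpl; destruct (P n); lia.
Qed.

Lemma hits_inj (m n : nat) : P m = true -> P n = true -> hits m = hits n -> m = n.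
Proof.
  assert (Hlt : forall m n, P m = true -> (m < n)%nat -> (hits m < hits n)%nat).
  { intros m' n' Hm Hmn; apply (Nat.lt_le_trans _ (hits (S m'))); [simpl; rewrite Hm; lia|].
    apply hits_le; exact Hmn. }
  intros Hm Hn Hh; destruct (Nat.lt_trichotomy m n) as [H|[H|H]]; [|exact H|];
    [specialize (Hlt _ _ Hm H) | specialize (Hlt _ _ Hn H)]; lia.
Qed.

Lemma exists_seq_on_hits (A : Type) (d : A) (f : nat -> A) :
  exists g : nat -> A, forall n, P n = true -> g (hits n) = f n.
Proof.
  exists (fun m => epsilon (inhabits d) (fun x => exists n, P n = true /\ hits n = m /\ f n = x)).
  intros n Hn.
  destruct (epsilon_spec (inhabits d) (fun x => exists n', P n' = true /\ hits n' = hits n /\ f n' = x))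
    as [n' [Hn' [Hh <-]]]; [eauto|].
  rewrite (hits_inj n' n Hn' Hn Hh); reflexivity.
Qed.
End Hits.

Lemma iter_shift_head (A : Type) (s : nat -> A) (k : nat) :
  Nat.iter k (fun t n => t (S n)) s 0%nat = s k.
Proof.
  revert s; induction k as [|k IH]; intro s; [reflexivity|].
  rewrite Nat.iter_succ_r; apply IH.
Qed.

Definition digit_of (q : R * R) : digit3 :=
  if pdec (q = qv D1) then D1 else if pdec (q = qv D2) then D2 else D0.

Lemma qv_digit_of (q : R * R) : is_digit q -> qv (digit_of q) = q.
Proof.
  unfold digit_of; intros Hq.
  destruct (pdec (q = qv D1)); [auto|]; destruct (pdec (q = qv D2)); [auto|].
  destruct Hq as [H|[H|H]]; [auto|contradiction|contradiction].
Qed.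

Section Orbit.
Variables (beta : R) (z : R * R) (a : nat -> R * R).
Hypotheses (Hbeta : 1 < beta) (Ha : forall k, is_digit (a k)) (Hrep : is_beta_rep beta a z).

Fixpoint orbit (n : nat) : R * R :=
  match n with O => z | S m => affmap beta (orbit m) (a m) end.

Lemma orbit_rep (n : nat) : is_beta_rep beta (fun k => a (n + k)%nat) (orbit n).
Proof.
  induction n as [|n IH]; [exact Hrep|].
  apply (is_beta_rep_ext _ (fun k => a (n + S k)%nat)); [intro k; f_equal; lia|].
  pose proof (is_beta_rep_shift _ _ _ Hbeta IH) as Hshift.
  cbv beta in Hshift; rewrite Nat.add_0_r in Hshift; exact Hshift.
Qed.

Lemma orbit_S_beta (n : nat) : S_beta beta (orbit n).
Proof. exact (is_beta_rep_S_beta _ _ _ Hbeta (fun k => Ha _) (orbit_rep n)). Qed.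

Definition orbit_region (n : nat) : region := region_of beta (orbit n).

Lemma orbit_admissible (n : nat) : admissible (orbit_region n) (digit_of (a n)).
Proof.
  apply region_of_admissible; [exact Hbeta|apply orbit_S_beta|].
  rewrite qv_digit_of by apply Ha; exact (orbit_S_beta (S n)).
Qed.

Definition omega_hits : nat -> nat := hits (fun n => consumes_omega (orbit_region n)).
Definition upsilon_hits : nat -> nat := hits (fun n => consumes_upsilon (orbit_region n)).

Variables (w : Omega) (u : Upsilon).
Hypothesis Hw : forall n, consumes_omega (orbit_region n) = true ->
  w (omega_hits n) = choice_bit (orbit_region n) (digit_of (a n)).
Hypothesis Hu : forall n, consumes_upsilon (orbit_region n) = true ->
  u (upsilon_hits n) = digit_of (a n).

Definition orbit_state (n : nat) : State :=
  (Nat.iter (omega_hits n) shiftO w, Nat.iter (upsilon_hits n) shiftU u, orbit n).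

Lemma Kstep_orbit_state (n : nat) : Kstep beta (orbit_state n) = (orbit_state (S n), a n).
Proof.
  unfold orbit_state; rewrite (Kstep_admissible _ _ _ _ (digit_of (a n))).
  - rewrite qv_digit_of by apply Ha; unfold omega_hits, upsilon_hits; simpl.
    destruct (consumes_omega _), (consumes_upsilon _); reflexivity.
  - apply orbit_admissible.
  - intro H; rewrite (iter_shift_head bool); exact (Hw n H).
  - intro H; rewrite (iter_shift_head digit3); exact (Hu n H).
Qed.

Lemma Kiter_orbit_state (n : nat) : Kiter beta n (w, u, z) = orbit_state n.
Proof.
  induction n as [|n IH]; [reflexivity|].
  cbn [Kiter]; rewrite IH; unfold K_beta; rewrite Kstep_orbit_state; reflexivity.
Qed.

Lemma digit_orbit (n : nat) : digit beta n (w, u, z) = a n.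
Proof. unfold digit, Defs.d1; rewrite Kiter_orbit_state, Kstep_orbit_state; reflexivity. Qed.

End Orbit.

Theorem theorem4p3 (beta : R) (z : R * R) (a : nat -> R * R) :
  1 < beta <= 3 / 2 ->
  S_beta beta z ->
  (forall i, a i = qv D0 \/ a i = qv D1 \/ a i = qv D2) ->
  is_beta_rep beta a z ->
  exists (w : Omega) (u : Upsilon),
    forall i : nat, a i = digit beta i (w, u, z).
Proof.
  intros [Hbeta _] _ Ha Hrep.
  destruct (exists_seq_on_hits (fun n => consumes_omega (orbit_region beta z a n)) bool false
    (fun n => choice_bit (orbit_region beta z a n) (digit_of (a n)))) as [w Hw].
  destruct (exists_seq_on_hits (fun n => consumes_upsilon (orbit_region beta z a n)) digit3 D0
    (fun n => digit_of (a n))) as [u Hu].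
  exists w, u; intro i; symmetry.
  exact (digit_orbit beta z a Hbeta Ha Hrep w u Hw Hu i).
Qed.
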